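(* Assume $\mu_Z\ge\eta$ and $\rho>\rho_0$. Then for every $z\ge0$ and $m\ge\beta^{1/(p-1)}$, the function $y\mapsto\hat v(y,z,m)$ on $[y^*(m),\beta]$ is continuous, strictly convex and decreasing.
   Context: Parameters: $\mu\in\mathbb R^d$, invertible $\sigma\in\mathbb R^{d\times d}$, $\mu_Z\in\mathbb R$, $\sigma_Z\ge0$, $\gamma\in\mathbb R^d$ with $|\gamma|=1$, $\rho>0$, $\beta>0$, $\lambda\in[0,1]$, $p<1$, $p\ne0$. Constants: $\alpha=\frac12\mu^\top(\sigma\sigma^\top)^{-1}\mu$, $\eta=\sigma_Z\gamma^\top\sigma^{-1}\mu$, $\kappa=\frac{-(\rho-\eta-\alpha)+\sqrt{(\rho-\eta-\alpha)^2+4\alpha(\rho-\mu_Z)}}{2\alpha}$, and $\rho_0=\max\{\mu_Z,2\alpha,\alpha p/(1-p)\}$ if $p\in(0,1)$, $\rho_0=\max\{\mu_Z,0\}$ if $p<0$. Free boundary. For $m\in[\beta^{1/(p-1)},\lambda^{-1}\beta^{1/(p-1)})$ (all $m\ge\beta^{1/(p-1)}$ if $\lambda=0$) put $y^*(m)=m^{p-1}$; for $\lambda>0$ and $m\ge\lambda^{-1}\beta^{1/(p-1)}$, $y^*(m)$ is the unique $y\in(0,m^{p-1}]$ solving \[ \tfrac{\beta m^{p-1}}{(\alpha+\rho)y}+\tfrac{\beta}{\alpha+\rho}\ln\tfrac{y}{\beta}+\tfrac{\rho}{(\alpha+\rho)^2}\beta^{-\rho/\alpha}y^{\frac{\alpha+\rho}{\alpha}}-\tfrac{m^{p-1}}{\alpha+\rho}\beta^{-\rho/\alpha}y^{\rho/\alpha}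 =\tfrac{\alpha\beta^{-\rho/\alpha}}{(\alpha+\rho)^2}\big(\lambda^{\frac{\alpha p-(1-p)\rho}{\alpha}}-1\big)m^{-\frac{(\alpha+\rho)(1-p)}{\alpha}}+\tfrac{\beta\lambda}{\alpha+\rho}\ln(\beta(\lambda m)^{1-p})-\tfrac{\beta}{\alpha+\rho}\ln(\beta m^{1-p})+\tfrac{\lambda\beta}{\alpha+\rho}-\tfrac{\alpha\beta}{(\alpha+\rho)^2}+\tfrac{(1-p)^2\beta(\lambda-1)}{p(\alpha+\rho)}-\tfrac{\beta(\alpha+\rho+p\alpha)(\lambda-1)}{p(\alpha+\rho)^2}+\tfrac{\beta(1-p)(\lambda-1)}{\alpha+\rho}. \] Coefficients (for $m\ge\beta^{1/(p-1)}$): $C_6(m)=\int_m^\infty\big(\frac{\alpha}{\rho(\alpha+\rho)}\ell^{p-1}\beta^{-\rho/\alpha}y^*(\ell)^{\rho/\alpha}-\frac{\alpha\beta}{(\alpha+\rho)^2}\beta^{-\frac{\alpha+\rho}{\alpha}}y^*(\ell)^{\frac{\alpha+\rho}{\alpha}}\big)d\ell$. With $A(m)=\frac{\alpha^2\beta^{-\rho/\alpha}}{(\alpha+\rho)^2(\rho(1-p)-\alpha p)}\big(\lambda^{\frac{\alpha p-(1-p)\rho}{\alpha}}-1\big)m^{\frac{\alpha p-(1-p)\rho}{\alpha}}$ (used only when $\lambda>0$) and $B(m)=\frac{\alpha^2\beta^{-\rho/\alpha}}{(\alpha+\rho)^2(\rho(1-p)-\alpha p)}m^{\frac{\alpha p-(1-p)\rho}{\alpha}}$: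 $C_1=A-\frac{\lambda\beta m}{\alpha+\rho}+\frac{\rho}{\alpha}C_6$; $C_2=\frac{\alpha}{\rho}A+C_6$; $C_4=-\frac{\alpha}{\rho}B+C_6$; for $\lambda>0$, $m\ge\lambda^{-1}\beta^{1/(p-1)}$: $C_3=A+\frac{\rho}{\alpha}C_6+\frac{\beta m}{\alpha+\rho}\big[\frac{(\alpha+\rho-p\rho-(1-p)^2(\alpha+\rho))\lambda}{p(\alpha+\rho)}-\lambda\ln(\beta(\lambda m)^{1-p})\big]$ and $C_5=\frac{\beta m}{\alpha+\rho}\big[-1+(1-\lambda)\frac{(1-p)^2(\alpha+\rho)-\alpha-\rho+p\rho}{p(\alpha+\rho)}-\lambda\ln(\beta(\lambda m)^{1-p})+\ln(\beta m^{1-p})\big]+A+\frac{\rho}{\alpha}C_6$; otherwise $C_3=-B+\frac{(1-p)^2\beta^{p/(p-1)}}{\rho(1-p)-\alpha p}+\frac{\rho}{\alpha}C_6$ and $C_5=-B+\frac{(1-p)^2\beta^{p/(p-1)}}{\rho(1-p)-\alpha p}+\frac{\rho}{\alpha}C_6+\frac{\beta m}{\alpha+\rho}\big[\frac{(1-p)^2}{p}-\frac{\alpha p+\alpha+\rho}{p(\alpha+\rho)}+\ln(\beta m^{1-p})\big]$. Dual function. For $z\ge0$, $m\ge\beta^{1/(p-1)}$, $y\in[y^*(m),\beta]$, with $\psi(y)=y-\frac{\beta^{1-\kappa}}{\kappa}y^\kappa$: $\hat v(y,z,m)=\frac1\beta C_1(m)y+\beta^{\rho/\alpha}C_2(m)y^{-\rho/\alpha}+\frac{(\lambda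 m)^p}{p\rho}+\frac{\lambda m}{\alpha+\rho}y\ln\frac y\beta+z\psi(y)$ if $(\lambda m)^{p-1}<y\le\beta$; $\hat v=\frac1\beta C_3(m)y+\beta^{\rho/\alpha}C_4(m)y^{-\rho/\alpha}+\frac{(1-p)^3}{p(\rho(1-p)-\alpha p)}y^{\frac{p}{p-1}}+z\psi(y)$ if $m^{p-1}<y\le(\lambda m)^{p-1}$; $\hat v=\frac1\beta C_5(m)y+\beta^{\rho/\alpha}C_6(m)y^{-\rho/\alpha}+\frac{m^p}{p\rho}+\frac{m}{\alpha+\rho}y\ln\frac y\beta+z\psi(y)$ if $y^*(m)\le y\le m^{p-1}$. *)

From Stdlib Require Import Reals ClassicalEpsilon.
From Coquelicot Require Import Coquelicot.
From mathcomp Require Import all_boot all_algebra.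
From mathcomp Require Import Rstruct.

Set Implicit Arguments.
Unset Strict Implicit.
Unset Printing Implicit Defensive.

Local Open Scope R_scope.

(* real power with real exponent (bases are always > 0 where used) *)
Definition rpow (x a : R) : R := Rpower x a.

Definition alphaC (d : nat) (mu : 'cV[R]_d) (sigma : 'M[R]_d) : R :=
  (1/2) * ((mu^T *m invmx (sigma *m sigma^T) *m mu) ord0 ord0)%R.

Definition etaC (d : nat) (mu : 'cV[R]_d) (sigma : 'M[R]_d) (sigmaZ : R)
  (gamma : 'cV[R]_d) : R :=
  sigmaZ * ((gamma^T *m invmx sigma *m mu) ord0 ord0)%R.

Definition norm2 (d : nat) (v : 'cV[R]_d) : R := ((v^T *m v) ord0 ord0)%R.

Definition kappaC (alpha eta rho muZ : R) : R :=
  (- (rho - eta - alpha)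
   + sqrt ((rho - eta - alpha)^2 + 4 * alpha * (rho - muZ))) / (2 * alpha).

Definition rho0C (alpha muZ p : R) : R :=
  if Rlt_dec 0 p then Rmax muZ (Rmax (2 * alpha) (alpha * p / (1 - p)))
  else Rmax muZ 0.

(* free boundary equation: LHS(m,y) = RHS(m) *)
Definition fb_lhs (alpha rho beta p m y : R) : R :=
  beta * rpow m (p - 1) / ((alpha + rho) * y)
  + beta / (alpha + rho) * ln (y / beta)
  + rho / (alpha + rho)^2 * rpow beta (- rho / alpha) * rpow y ((alpha + rho) / alpha)
  - rpow m (p - 1) / (alpha + rho) * rpow beta (- rho / alpha) * rpow y (rho / alpha).

Definition fb_rhs (alpha rho beta lam p m : R) : R :=
  alpha * rpow beta (- rho / alpha) / (alpha + rho)^2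
    * (rpow lam ((alpha * p - (1 - p) * rho) / alpha) - 1)
    * rpow m (- ((alpha + rho) * (1 - p)) / alpha)
  + beta * lam / (alpha + rho) * ln (beta * rpow (lam * m) (1 - p))
  - beta / (alpha + rho) * ln (beta * rpow m (1 - p))
  + lam * beta / (alpha + rho)
  - alpha * beta / (alpha + rho)^2
  + (1 - p)^2 * beta * (lam - 1) / (p * (alpha + rho))
  - beta * (alpha + rho + p * alpha) * (lam - 1) / (p * (alpha + rho)^2)
  + beta * (1 - p) * (lam - 1) / (alpha + rho).

Definition upper_region (beta lam p m : R) : Prop :=
  0 < lam /\ / lam * rpow beta (1 / (p - 1)) <= m.

Definition upper_region_dec (beta lam p m : R) :
  {upper_region beta lam p m} + {~ upper_region beta lam p m}.
Proof.
unfold upper_region.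
destruct (Rlt_dec 0 lam) as [H1|H1];
  [destruct (Rle_dec (/ lam * rpow beta (1 / (p - 1))) m) as [H2|H2]|].
- left; split; assumption.
- right; intros [_ H]; contradiction.
- right; intros [H _]; contradiction.
Defined.

Definition ystar (alpha rho beta lam p m : R) : R :=
  if upper_region_dec beta lam p m then
    epsilon (inhabits 0) (fun y => 0 < y <= rpow m (p - 1)
                     /\ fb_lhs alpha rho beta p m y = fb_rhs alpha rho beta lam p m)
  else rpow m (p - 1).

Definition C6 (alpha rho beta lam p m : R) : R :=
  RInt_gen (fun l : R =>
      alpha / (rho * (alpha + rho)) * rpow l (p - 1) * rpow beta (- rho / alpha)
        * rpow (ystar alpha rho beta lam p l) (rho / alpha)
      - alpha * beta / (alpha + rho)^2 * rpow beta (- (alpha + rho) / alpha)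
        * rpow (ystar alpha rho beta lam p l) ((alpha + rho) / alpha))
    (at_point m) (Rbar_locally p_infty).

Definition expoE (alpha rho p : R) : R := (alpha * p - (1 - p) * rho) / alpha.

Definition Acoef (alpha rho beta lam p m : R) : R :=
  alpha^2 * rpow beta (- rho / alpha)
    / ((alpha + rho)^2 * (rho * (1 - p) - alpha * p))
    * (rpow lam (expoE alpha rho p) - 1) * rpow m (expoE alpha rho p).

Definition Bcoef (alpha rho beta p m : R) : R :=
  alpha^2 * rpow beta (- rho / alpha)
    / ((alpha + rho)^2 * (rho * (1 - p) - alpha * p))
    * rpow m (expoE alpha rho p).

Definition C1 (alpha rho beta lam p m : R) : R :=
  Acoef alpha rho beta lam p m - lam * beta * m / (alpha + rho)
  + rho / alpha * C6 alpha rho beta lam p m.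

Definition C2 (alpha rho beta lam p m : R) : R :=
  alpha / rho * Acoef alpha rho beta lam p m + C6 alpha rho beta lam p m.

Definition C4 (alpha rho beta lam p m : R) : R :=
  - (alpha / rho) * Bcoef alpha rho beta p m + C6 alpha rho beta lam p m.

Definition C3 (alpha rho beta lam p m : R) : R :=
  if upper_region_dec beta lam p m then
    Acoef alpha rho beta lam p m + rho / alpha * C6 alpha rho beta lam p m
    + beta * m / (alpha + rho)
      * ((alpha + rho - p * rho - (1 - p)^2 * (alpha + rho)) * lam / (p * (alpha + rho))
         - lam * ln (beta * rpow (lam * m) (1 - p)))
  else
    - Bcoef alpha rho beta p m
    + (1 - p)^2 * rpow beta (p / (p - 1)) / (rho * (1 - p) - alpha * p)
    + rho / alpha * C6 alpha rho beta lam p m.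

Definition C5 (alpha rho beta lam p m : R) : R :=
  if upper_region_dec beta lam p m then
    beta * m / (alpha + rho)
      * (-1 + (1 - lam) * ((1 - p)^2 * (alpha + rho) - alpha - rho + p * rho)
                          / (p * (alpha + rho))
         - lam * ln (beta * rpow (lam * m) (1 - p)) + ln (beta * rpow m (1 - p)))
    + Acoef alpha rho beta lam p m + rho / alpha * C6 alpha rho beta lam p m
  else
    - Bcoef alpha rho beta p m
    + (1 - p)^2 * rpow beta (p / (p - 1)) / (rho * (1 - p) - alpha * p)
    + rho / alpha * C6 alpha rho beta lam p m
    + beta * m / (alpha + rho)
      * ((1 - p)^2 / p - (alpha * p + alpha + rho) / (p * (alpha + rho))
         + ln (beta * rpow m (1 - p))).

Definition psiC (beta kappa y : R) : R :=
  y - rpow beta (1 - kappa) / kappa * rpow y kappa.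

(* The first branch is the region
   (lambda m)^{p-1} < y (empty when lambda = 0, where (lambda m)^{p-1} = +oo);
   the second is m^{p-1} < y <= (lambda m)^{p-1}; the third y <= m^{p-1}. *)
Definition vhat (alpha rho beta lam p kappa y z m : R) : R :=
  if Rlt_dec 0 lam then
  if Rlt_dec (rpow (lam * m) (p - 1)) y then
    C1 alpha rho beta lam p m / beta * y
    + rpow beta (rho / alpha) * C2 alpha rho beta lam p m * rpow y (- rho / alpha)
    + rpow (lam * m) p / (p * rho)
    + lam * m / (alpha + rho) * y * ln (y / beta)
    + z * psiC beta kappa y
  else if Rlt_dec (rpow m (p - 1)) y then
    C3 alpha rho beta lam p m / beta * y
    + rpow beta (rho / alpha) * C4 alpha rho beta lam p m * rpow y (- rho / alpha)
    + (1 - p)^3 / (p * (rho * (1 - p) - alpha * p)) * rpow y (p / (p - 1))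
    + z * psiC beta kappa y
  else
    C5 alpha rho beta lam p m / beta * y
    + rpow beta (rho / alpha) * C6 alpha rho beta lam p m * rpow y (- rho / alpha)
    + rpow m p / (p * rho)
    + m / (alpha + rho) * y * ln (y / beta)
    + z * psiC beta kappa y
  else if Rlt_dec (rpow m (p - 1)) y then
    C3 alpha rho beta lam p m / beta * y
    + rpow beta (rho / alpha) * C4 alpha rho beta lam p m * rpow y (- rho / alpha)
    + (1 - p)^3 / (p * (rho * (1 - p) - alpha * p)) * rpow y (p / (p - 1))
    + z * psiC beta kappa y
  else
    C5 alpha rho beta lam p m / beta * y
    + rpow beta (rho / alpha) * C6 alpha rho beta lam p m * rpow y (- rho / alpha)
    + rpow m p / (p * rho)
    + m / (alpha + rho) * y * ln (y / beta)
    + z * psiC beta kappa y.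

Definition continuous_on_Icc (f : R -> R) (a b : R) : Prop :=
  forall x, a <= x <= b ->
    filterlim f (within (fun y => a <= y <= b) (locally x)) (locally (f x)).

Definition strictly_convex_on_Icc (f : R -> R) (a b : R) : Prop :=
  forall x y t, a <= x <= b -> a <= y <= b -> x <> y -> 0 < t < 1 ->
    f (t * x + (1 - t) * y) < t * f x + (1 - t) * f y.

(* decreasing (non-increasing; for a strictly convex function this is
   equivalent to strict decrease) *)
Definition decreasing_on_Icc (f : R -> R) (a b : R) : Prop :=
  forall x y, a <= x -> x <= y -> y <= b -> f y <= f x.

From Pilot Require Import Defs.
From Stdlib Require Import Reals Ranalysis5 Lra Psatz Classical ClassicalEpsilon.
From Coquelicot Require Import Coquelicot.
From mathcomp Require Import all_boot all_algebra.
From mathcomp Require Import Rstruct.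

Local Open Scope R_scope.

(* On [y*(m), beta], vhat(., z, m) is glued from at most three explicit pieces of the form
   c1 y + c2 y^(-rho/alpha) + c0 + c3 y ln(y/beta) + c4 y^(p/(p-1)) + z psi(y),
   joined at u = m^(p-1) and w = (lam m)^(p-1).  The constants C1, ..., C5 are exactly those
   for which neighbouring pieces agree to first order at the junctions and the last piece has
   zero derivative at beta, so vhat is differentiable with derivative vanishing at beta.
   Each piece has a positive second derivative on its interval; this uses C6 >= 0, kappa <= 1
   (psi is convex) and rho (1 - p) > alpha p, which follows from rho > rho0.  Hence the
   derivative is strictly increasing and nonpositive, so vhat is strictly convex and
   decreasing.  Finally C6 >= 0 because its integrand is nonnegative as soon as
   y*(l) <= l^(p-1), and in the upper region the free boundary equation does have a root in
   (0, m^(p-1)]: at m^(p-1) its two sides differ by a positive multiple of t - 1 - ln t >= 0,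
   while its left side blows up at 0. *)

Lemma rpow_gt0 x e : 0 < rpow x e.
Proof. exact: exp_pos. Qed.

Lemma rpow_neq0 x e : rpow x e <> 0.
Proof. by apply: Rgt_not_eq; apply: rpow_gt0. Qed.

Lemma rpow_plus x a c : rpow x (a + c) = rpow x a * rpow x c.
Proof. exact: Rpower_plus. Qed.

Lemma rpow_rpow x a c : rpow (rpow x a) c = rpow x (a * c).
Proof. exact: Rpower_mult. Qed.

Lemma rpow_opp x a : rpow x (- a) = / rpow x a.
Proof. exact: Rpower_Ropp. Qed.

Lemma rpow_1 x : 0 < x -> rpow x 1 = x.
Proof. exact: Rpower_1. Qed.

Lemma rpow_0 x : 0 < x -> rpow x 0 = 1.
Proof. exact: Rpower_O. Qed.

Lemma rpow_sub1 x c : 0 < x -> rpow x (c - 1) = rpow x c / x.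
Proof. by move=> x_gt0; rewrite (_ : c - 1 = c + - 1) ?rpow_plus ?rpow_opp ?rpow_1 //; ring. Qed.

Lemma rpow_opp_div x a b : rpow x (- a / b) = / rpow x (a / b).
Proof. by rewrite -rpow_opp /Rdiv Ropp_mult_distr_l. Qed.

Lemma ln_rpow x e : ln (rpow x e) = e * ln x.
Proof. exact: ln_Rpower. Qed.

Lemma rpow_mul x y e : 0 < x -> 0 < y -> rpow (x * y) e = rpow x e * rpow y e.
Proof. by move=> x_gt0 y_gt0; rewrite /rpow Rpower_mult_distr. Qed.

Lemma rpow_le_antitone x y e : 0 < x <= y -> e <= 0 -> rpow y e <= rpow x e.
Proof.
move=> xy e_le0; have inv t : rpow t e = / rpow t (- e) by rewrite -rpow_opp Ropp_involutive.
rewrite !inv; apply: Rinv_le_contravar; first exact: rpow_gt0.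
by apply: Rle_Rpower_l; lra.
Qed.

Lemma rpow_lt_antitone x y e : 0 < x < y -> e < 0 -> rpow y e < rpow x e.
Proof.
move=> xy e_lt0; have inv t : rpow t e = / rpow t (- e) by rewrite -rpow_opp Ropp_involutive.
rewrite !inv; apply: Rinv_lt_contravar; first by apply: Rmult_lt_0_compat; apply: rpow_gt0.
by apply: Rlt_Rpower_l; lra.
Qed.

Lemma rpow_inv_exponent b e : 0 < b -> e <> 0 -> rpow (rpow b (1 / e)) e = b.
Proof. by move=> b_gt0 e_neq0; rewrite rpow_rpow (_ : 1 / e * e = 1) ?rpow_1 //; field. Qed.

Lemma is_derive_rpow e y : 0 < y -> is_derive (fun x => rpow x e) y (e * rpow y (e - 1)).
Proof. by move=> y_gt0; apply/is_derive_Reals/derivable_pt_lim_power. Qed.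

Lemma Derive_rpow e y : 0 < y -> Derive (fun x => rpow x e) y = e * rpow y (e - 1).
Proof. by move=> y_gt0; apply/is_derive_unique/is_derive_rpow. Qed.

Lemma rpow_pred_le x b p : 0 < b -> p < 1 -> rpow b (1 / (p - 1)) <= x -> rpow x (p - 1) <= b.
Proof.
move=> b_gt0 p_lt1 bx; rewrite -(rpow_inv_exponent b (p - 1) b_gt0); last lra.
by apply: rpow_le_antitone; [split; [apply: rpow_gt0 | done] | lra].
Qed.

Lemma rpow_pred_gt x b p : 0 < b -> p < 1 -> 0 < x < rpow b (1 / (p - 1)) -> b < rpow x (p - 1).
Proof.
move=> b_gt0 p_lt1 xb; rewrite -(rpow_inv_exponent b (p - 1) b_gt0); last lra.
by apply: rpow_lt_antitone; lra.
Qed.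

Lemma ln_le_sub1 {x} : 0 < x -> ln x <= x - 1.
Proof. by move=> x_gt0; have := exp_ineq1_le (ln x); rewrite exp_ln //; lra. Qed.

Definition strictly_increasing_on_Icc (g : R -> R) (a b : R) : Prop :=
  forall x y, a <= x -> x < y -> y <= b -> g x < g y.

Definition convex_decreasing_on (f : R -> R) (a b : R) : Prop :=
  continuous_on_Icc f a b /\ strictly_convex_on_Icc f a b /\ decreasing_on_Icc f a b.

Lemma convex_decreasing_on_ext f g a b :
  (forall y, a <= y <= b -> f y = g y) ->
  convex_decreasing_on g a b -> convex_decreasing_on f a b.
Proof.
move=> fg [g_cont [g_convex g_decr]]; split; [|split].
- move=> x x_ab; rewrite fg //.
  apply: (filterlim_ext_loc g); last exact: g_cont.
  by rewrite /within; apply: filter_forall => y y_ab; rewrite fg.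
- move=> x y t x_ab y_ab xy t01.
  have txy_ab : a <= t * x + (1 - t) * y <= b by case: x_ab; case: y_ab; split; nra.
  by rewrite !fg //; apply: g_convex.
- by move=> x y ax xy yb; rewrite !fg; try lra; apply: g_decr.
Qed.

Section DerivativeCriterion.
Variables (f g : R -> R) (a b : R).
Hypothesis f_derive : forall x, a <= x <= b -> is_derive f x (g x).
Hypothesis g_incr : strictly_increasing_on_Icc g a b.

Lemma mvt_Icc x y : a <= x -> x < y -> y <= b ->
  exists c, x < c < y /\ f y - f x = g c * (y - x).
Proof.
move=> ax xy yb.
have [c [fc c_xy]] : exists c, f y - f x = g c * (y - x) /\ x < c < y.
  by apply: MVT_cor2 => // c c_xy; apply/is_derive_Reals/f_derive; lra.
by exists c.
Qed.

Lemma continuous_on_Icc_of_derive : continuous_on_Icc f a b.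
Proof.
move=> x x_ab; apply: filterlim_filter_le_1; first exact: filter_le_within.
by apply: ex_derive_continuous; exists (g x); apply: f_derive.
Qed.

Lemma strictly_convex_on_Icc_of_derive : strictly_convex_on_Icc f a b.
Proof.
have convex_lt : forall x y t, a <= x -> x < y -> y <= b -> 0 < t < 1 ->
    f (t * x + (1 - t) * y) < t * f x + (1 - t) * f y.
  move=> x y t ax xy yb t01; set s := t * x + (1 - t) * y.
  have [c1 [c1_xs f_xs]] : exists c, x < c < s /\ f s - f x = g c * (s - x).
    by apply: mvt_Icc; rewrite /s; nra.
  have [c2 [c2_sy f_sy]] : exists c, s < c < y /\ f y - f s = g c * (y - s).
    by apply: mvt_Icc; rewrite /s; nra.
  have g12 : g c1 < g c2 by apply: g_incr; lra.
  have sx : s - x = (1 - t) * (y - x) by rewrite /s; ring.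
  have ys : y - s = t * (y - x) by rewrite /s; ring.
  rewrite sx in f_xs; rewrite ys in f_sy.
  have : 0 < t * (1 - t) * (y - x) by apply: Rmult_lt_0_compat; nra.
  nra.
move=> x y t [ax xb] [ay yb] x_neq_y t01.
case: (Rlt_or_le x y) => [xy|yx]; first exact: convex_lt.
have -> : t * x + (1 - t) * y = (1 - t) * y + (1 - (1 - t)) * x by ring.
have -> : t * f x + (1 - t) * f y = (1 - t) * f y + (1 - (1 - t)) * f x by ring.
by apply: convex_lt; lra.
Qed.

Lemma decreasing_on_Icc_of_derive : g b <= 0 -> decreasing_on_Icc f a b.
Proof.
move=> gb_le0 x y ax xy yb.
case: (Req_dec x y) => [->|x_neq_y]; first lra.
have [c [c_xy fxy]] : exists c, x < c < y /\ f y - f x = g c * (y - x) by apply: mvt_Icc; lra.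
have : g c < g b by apply: g_incr; lra.
nra.
Qed.

Lemma convex_decreasing_on_of_derive : g b <= 0 -> convex_decreasing_on f a b.
Proof.
move=> gb_le0; split; first exact: continuous_on_Icc_of_derive.
by split; [exact: strictly_convex_on_Icc_of_derive | exact: decreasing_on_Icc_of_derive].
Qed.

End DerivativeCriterion.

Lemma strictly_increasing_of_derive_pos (g dg : R -> R) (l r : R) :
  (forall x, l <= x <= r -> is_derive g x (dg x)) -> (forall x, l <= x <= r -> 0 < dg x) ->
  strictly_increasing_on_Icc g l r.
Proof.
move=> g_derive dg_gt0 x y lx xy yr.
by apply: (incr_function_le g l r dg) => //= t lt tr; [apply: g_derive | apply: dg_gt0].
Qed.

Definition glue (c : R) (Q P : R -> R) (y : R) : R := if Rlt_dec c y then Q y else P y.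

Lemma glue_left {c Q P y} : y <= c -> glue c Q P y = P y.
Proof. by move=> yc; rewrite /glue; case: Rlt_dec => // cy; lra. Qed.

Lemma glue_right {c Q P y} : P c = Q c -> c <= y -> glue c Q P y = Q y.
Proof.
move=> PQc cy; rewrite /glue; case: Rlt_dec => // not_cy /=.
by have -> : y = c by lra.
Qed.

Lemma glue_is_derive (P Q dP dQ : R -> R) c x :
  is_derive P x (dP x) -> is_derive Q x (dQ x) -> P c = Q c -> dP c = dQ c ->
  is_derive (glue c Q P) x (glue c dQ dP x).
Proof.
move=> dPx dQx PQc dPQc.
case: (Rtotal_order x c) => [xc|[xc|cx]].
- rewrite glue_left; last lra.
  apply: (is_derive_ext_loc P) dPx.
  apply: (filter_imp (fun y => y < c)); last exact: open_lt.
  by move=> y yc; rewrite glue_left //; lra.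
- subst x; rewrite glue_left; last lra.
  move/is_derive_Reals: dPx => dPx; move/is_derive_Reals: dQx => dQx.
  apply/is_derive_Reals => eps eps_gt0.
  have [d1 dP_close] := dPx eps eps_gt0; have [d2 dQ_close] := dQx eps eps_gt0.
  have d_gt0 : 0 < Rmin d1 d2 by apply: Rmin_pos; [apply: cond_pos | apply: cond_pos].
  exists (mkposreal _ d_gt0) => h h_neq0 /= h_small.
  have [h1 h2] : Rabs h < d1 /\ Rabs h < d2.
    by split; apply: Rlt_le_trans h_small _; [apply: Rmin_l | apply: Rmin_r].
  rewrite (glue_left (Rle_refl c)) /glue; case: Rlt_dec => side /=.
  + by rewrite PQc dPQc; apply: dQ_close.
  + exact: dP_close.
- rewrite glue_right //; last lra.
  apply: (is_derive_ext_loc Q) dQx.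
  apply: (filter_imp (fun y => c < y)); last exact: open_gt.
  by move=> y cy; rewrite glue_right //; lra.
Qed.

Lemma glue_strictly_increasing P Q c l r : l <= c <= r ->
  strictly_increasing_on_Icc P l c -> strictly_increasing_on_Icc Q c r -> P c = Q c ->
  strictly_increasing_on_Icc (glue c Q P) l r.
Proof.
move=> lcr P_incr Q_incr PQc x y lx xy yr.
case: (Rle_or_lt y c) => [yc|cy]; first by rewrite !glue_left; try lra; apply: P_incr.
rewrite (glue_right PQc (Rlt_le _ _ cy)).
case: (Rle_or_lt c x) => [cx|xc]; first by rewrite glue_right //; apply: Q_incr.
rewrite glue_left; last lra.
apply: (Rle_lt_trans _ (P c)).
  by case: (Req_dec x c) => [->|x_neq_c]; [lra | apply/Rlt_le/P_incr; lra].
by rewrite PQc; apply: Q_incr; lra.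
Qed.

Section DualPieces.
Variables (al rho beta p kappa z : R).
Hypotheses (al_gt0 : 0 < al) (beta_gt0 : 0 < beta) (p_lt1 : p < 1) (kappa_gt0 : 0 < kappa).

Local Notation e := (- rho / al).
Local Notation q := (p / (p - 1)).

Definition piece (c1 c2 c0 c3 c4 y : R) : R :=
  c1 * y + c2 * rpow y e + c0 + c3 * (y * ln (y / beta)) + c4 * rpow y q
  + z * psiC beta kappa y.

Definition piece_d (c1 c2 c3 c4 y : R) : R :=
  c1 + c2 * (e * rpow y (e - 1)) + c3 * (ln (y / beta) + 1) + c4 * (q * rpow y (q - 1))
  + z * (1 - rpow beta (1 - kappa) * rpow y (kappa - 1)).

Definition piece_dd (c2 c3 c4 y : R) : R :=
  c2 * (e * (e - 1) * rpow y (e - 2)) + c3 / y + c4 * (q * (q - 1) * rpow y (q - 2))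
  + z * ((1 - kappa) * rpow beta (1 - kappa) * rpow y (kappa - 2)).

Lemma piece_is_derive c1 c2 c0 c3 c4 y : 0 < y ->
  is_derive (piece c1 c2 c0 c3 c4) y (piece_d c1 c2 c3 c4 y).
Proof.
move=> y_gt0; rewrite /piece /piece_d /psiC.
auto_derive.
  repeat split; try (eexists; apply: is_derive_rpow); try lra.
  by apply: Rdiv_lt_0_compat.
rewrite !Derive_rpow // -/(y / beta); field; lra.
Qed.

Lemma piece_d_is_derive c1 c2 c3 c4 y : 0 < y ->
  is_derive (piece_d c1 c2 c3 c4) y (piece_dd c2 c3 c4 y).
Proof.
move=> y_gt0; rewrite /piece_d /piece_dd.
auto_derive.
  repeat split; try (eexists; apply: is_derive_rpow); try lra.
  by apply: Rdiv_lt_0_compat.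
rewrite !Derive_rpow // -/(y / beta).
rewrite (_ : e - 1 - 1 = e - 2); last ring.
rewrite (_ : q - 1 - 1 = q - 2); last ring.
rewrite (_ : kappa - 1 - 1 = kappa - 2); last ring.
field; lra.
Qed.

End DualPieces.

Section JunctionPowers.
Variables (al rho p beta x : R).
Hypotheses (al_gt0 : 0 < al) (p_lt1 : p < 1) (beta_gt0 : 0 < beta) (x_gt0 : 0 < x).

Local Notation E := (expoE al rho p).

Lemma rpow_junction_e : rpow (rpow x (p - 1)) (- rho / al) = rpow x p / rpow x E.
Proof.
rewrite rpow_rpow (_ : (p - 1) * (- rho / al) = p + - E); last by rewrite /expoE; field; lra.
by rewrite rpow_plus rpow_opp.
Qed.

Lemma rpow_junction_e1 : rpow (rpow x (p - 1)) (- rho / al - 1) = x / rpow x E.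
Proof.
rewrite rpow_rpow (_ : (p - 1) * (- rho / al - 1) = 1 + - E); last by rewrite /expoE; field; lra.
by rewrite rpow_plus rpow_opp rpow_1.
Qed.

Lemma rpow_junction_q : rpow (rpow x (p - 1)) (p / (p - 1)) = rpow x p.
Proof. by rewrite rpow_rpow (_ : (p - 1) * (p / (p - 1)) = p) //; field; lra. Qed.

Lemma rpow_junction_q1 : rpow (rpow x (p - 1)) (p / (p - 1) - 1) = x.
Proof. by rewrite rpow_rpow (_ : (p - 1) * (p / (p - 1) - 1) = 1) ?rpow_1 //; field; lra. Qed.

Lemma ln_junction : ln (rpow x (p - 1) / beta) = (p - 1) * ln x - ln beta.
Proof. by rewrite ln_div ?ln_rpow //; exact: rpow_gt0. Qed.

Lemma ln_mul_rpow c : ln (beta * rpow x c) = ln beta + c * ln x.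
Proof. by rewrite ln_mult ?ln_rpow //; exact: rpow_gt0. Qed.

End JunctionPowers.

Section DualFunction.
Variables (al rho beta lam p kappa z m : R).
Hypotheses (al_gt0 : 0 < al) (rho_gt0 : 0 < rho) (beta_gt0 : 0 < beta) (m_gt0 : 0 < m)
  (p_lt1 : p < 1) (p_neq0 : p <> 0) (D_gt0 : 0 < rho * (1 - p) - al * p)
  (kappa_gt0 : 0 < kappa) (kappa_le1 : kappa <= 1) (z_ge0 : 0 <= z).

Local Notation piece := (piece al rho beta p kappa z).
Local Notation piece_d := (piece_d al rho beta p kappa z).
Local Notation piece_dd := (piece_dd al rho beta p kappa z).
Local Notation c2_scale := (rpow beta (rho / al)).
Local Notation u := (rpow m (p - 1)).
Local Notation w := (rpow (lam * m) (p - 1)).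
Local Notation c1 := (Defs.C1 al rho beta lam p m).
Local Notation c2 := (Defs.C2 al rho beta lam p m).
Local Notation c3 := (Defs.C3 al rho beta lam p m).
Local Notation c4 := (Defs.C4 al rho beta lam p m).
Local Notation c5 := (Defs.C5 al rho beta lam p m).
Local Notation c6 := (Defs.C6 al rho beta lam p m).
Local Notation K := ((1 - p) ^ 3 / (p * (rho * (1 - p) - al * p))).

Definition vhat1 :=
  piece (c1 / beta) (c2_scale * c2) (rpow (lam * m) p / (p * rho)) (lam * m / (al + rho)) 0.
Definition dvhat1 := piece_d (c1 / beta) (c2_scale * c2) (lam * m / (al + rho)) 0.
Definition ddvhat1 := piece_dd (c2_scale * c2) (lam * m / (al + rho)) 0.

Definition vhat2 := piece (c3 / beta) (c2_scale * c4) 0 0 K.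
Definition dvhat2 := piece_d (c3 / beta) (c2_scale * c4) 0 K.
Definition ddvhat2 := piece_dd (c2_scale * c4) 0 K.

Definition vhat3 := piece (c5 / beta) (c2_scale * c6) (rpow m p / (p * rho)) (m / (al + rho)) 0.
Definition dvhat3 := piece_d (c5 / beta) (c2_scale * c6) (m / (al + rho)) 0.
Definition ddvhat3 := piece_dd (c2_scale * c6) (m / (al + rho)) 0.

Lemma vhat_glue y : vhat al rho beta lam p kappa y z m =
  if Rlt_dec 0 lam then glue w vhat1 (glue u vhat2 vhat3) y else glue u vhat2 vhat3 y.
Proof.
rewrite /vhat /glue /vhat1 /vhat2 /vhat3 /piece.
by repeat match goal with |- context [Rlt_dec ?a ?b] => case: (Rlt_dec a b) => ? /= end; ring.
Qed.

Lemma vhat3_vhat2_at_u : vhat3 u = vhat2 u.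
Proof.
rewrite /vhat3 /vhat2 /piece /Defs.C5 /Defs.C3 /Defs.C4 /Acoef /Bcoef.
rewrite rpow_junction_e // rpow_junction_q // ln_junction // rpow_opp_div.
destruct (upper_region_dec beta lam p m) as [[lam_gt0 lam_m]|not_upper].
  rewrite /= !ln_mul_rpow // ln_mult ?(rpow_sub1 m p) //; try lra.
  field; repeat split; try apply: rpow_neq0; lra.
rewrite /= !ln_mul_rpow //.
rewrite (rpow_sub1 m p) //; field; repeat split; try apply: rpow_neq0; lra.
Qed.

Lemma dvhat3_dvhat2_at_u : dvhat3 u = dvhat2 u.
Proof.
rewrite /dvhat3 /dvhat2 /piece_d /Defs.C5 /Defs.C3 /Defs.C4 /Acoef /Bcoef.
rewrite rpow_junction_e1 // rpow_junction_q1 // ln_junction // rpow_opp_div.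
destruct (upper_region_dec beta lam p m) as [[lam_gt0 lam_m]|not_upper].
  rewrite /= !ln_mul_rpow // ln_mult //; try lra.
  field; repeat split; try apply: rpow_neq0; lra.
rewrite /= !ln_mul_rpow //; field; repeat split; try apply: rpow_neq0; lra.
Qed.

Lemma vhat2_vhat1_at_w : upper_region beta lam p m -> vhat2 w = vhat1 w.
Proof.
move=> upper; have [lam_gt0 _] := upper; have lm_gt0 : 0 < lam * m by nra.
rewrite /vhat2 /vhat1 /piece /Defs.C1 /Defs.C2 /Defs.C3 /Defs.C4 /Acoef /Bcoef.
rewrite rpow_junction_e // rpow_junction_q // ln_junction // rpow_opp_div.
destruct (upper_region_dec beta lam p m) as [in_upper|not_upper]; last contradiction.
rewrite /= !ln_mul_rpow // (rpow_sub1 (lam * m) p) // (rpow_mul lam m (expoE al rho p)) //.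
field; repeat split; try apply: rpow_neq0; lra.
Qed.

Lemma dvhat2_dvhat1_at_w : upper_region beta lam p m -> dvhat2 w = dvhat1 w.
Proof.
move=> upper; have [lam_gt0 _] := upper; have lm_gt0 : 0 < lam * m by nra.
rewrite /dvhat2 /dvhat1 /piece_d /Defs.C1 /Defs.C2 /Defs.C3 /Defs.C4 /Acoef /Bcoef.
rewrite rpow_junction_e1 // rpow_junction_q1 // ln_junction // rpow_opp_div.
destruct (upper_region_dec beta lam p m) as [in_upper|not_upper]; last contradiction.
rewrite /= !ln_mul_rpow // (rpow_mul lam m (expoE al rho p)) //.
field; repeat split; try apply: rpow_neq0; lra.
Qed.

Lemma rpow_psi_at_beta : rpow beta (1 - kappa) * rpow beta (kappa - 1) = 1.
Proof. by rewrite -rpow_plus (_ : 1 - kappa + (kappa - 1) = 0) ?rpow_0 //; ring. Qed.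

Lemma dvhat1_at_beta : dvhat1 beta = 0.
Proof.
rewrite /dvhat1 /piece_d /Defs.C1 /Defs.C2 rpow_psi_at_beta rpow_sub1 // rpow_opp_div.
rewrite /Rdiv Rinv_r ?ln_1; try lra.
field; repeat split; try apply: rpow_neq0; lra.
Qed.

Lemma dvhat2_at_beta : ~ upper_region beta lam p m -> dvhat2 beta = 0.
Proof.
move=> not_upper; rewrite /dvhat2 /piece_d /Defs.C3 /Defs.C4 /Bcoef.
rewrite rpow_psi_at_beta !rpow_sub1 // rpow_opp_div.
destruct (upper_region_dec beta lam p m) as [in_upper|not_upper']; first contradiction.
rewrite /=; field; repeat split; try apply: rpow_neq0; lra.
Qed.

Lemma expoE_lt0 : expoE al rho p < 0.
Proof. by rewrite /expoE; apply/Rlt_div_l; lra. Qed.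

Lemma Acoef_ge0 : 0 < lam <= 1 -> 0 <= Acoef al rho beta lam p m.
Proof.
move=> lam01; have E_lt0 := expoE_lt0.
have lamE_ge1 : 1 <= rpow lam (expoE al rho p).
  have : ln lam <= 0 by rewrite -ln_1; apply: ln_le; lra.
  by move=> ln_le0; apply: Rle_trans (exp_ineq1_le _); nra.
rewrite /Acoef; apply: Rmult_le_pos; last exact/Rlt_le/rpow_gt0.
apply: Rmult_le_pos; last lra.
apply/Rlt_le/Rdiv_lt_0_compat; first by apply: Rmult_lt_0_compat; [nra | apply: rpow_gt0].
by apply: Rmult_lt_0_compat; nra.
Qed.

Lemma e_mul_pred_gt0 : 0 < - rho / al * (- rho / al - 1).
Proof.
have ra_gt0 : 0 < rho / al by apply: Rdiv_lt_0_compat.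
by rewrite (_ : - rho / al = - (rho / al)); [nra | field; lra].
Qed.

Lemma psi_term_ge0 y : 0 <= z * ((1 - kappa) * rpow beta (1 - kappa) * rpow y (kappa - 2)).
Proof.
apply: Rmult_le_pos => //; apply: Rmult_le_pos; last exact/Rlt_le/rpow_gt0.
by apply: Rmult_le_pos; [lra | exact/Rlt_le/rpow_gt0].
Qed.

Hypothesis c6_ge0 : 0 <= c6.

Lemma ddvhat1_gt0 y : 0 < lam <= 1 -> 0 < y -> 0 < ddvhat1 y.
Proof.
move=> lam01 y_gt0; rewrite /ddvhat1 /piece_dd /Defs.C2.
have A_ge0 := Acoef_ge0 lam01; have ee_gt0 := e_mul_pred_gt0.
have := psi_term_ge0 y; have : 0 < lam * m / (al + rho) / y.
  by apply: Rdiv_lt_0_compat => //; apply: Rdiv_lt_0_compat; nra.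
have : 0 <= c2_scale * (al / rho * Acoef al rho beta lam p m + c6)
            * (- rho / al * (- rho / al - 1) * rpow y (- rho / al - 2)).
  apply: Rmult_le_pos; last by apply: Rmult_le_pos; [lra | exact/Rlt_le/rpow_gt0].
  apply: Rmult_le_pos; first exact/Rlt_le/rpow_gt0.
  by apply: Rplus_le_le_0_compat => //; apply: Rmult_le_pos => //; apply/Rlt_le/Rdiv_lt_0_compat.
lra.
Qed.

Lemma ddvhat3_gt0 y : 0 < y -> 0 < ddvhat3 y.
Proof.
move=> y_gt0; rewrite /ddvhat3 /piece_dd; have ee_gt0 := e_mul_pred_gt0.
have := psi_term_ge0 y; have : 0 < m / (al + rho) / y.
  by apply: Rdiv_lt_0_compat => //; apply: Rdiv_lt_0_compat; lra.
have : 0 <= c2_scale * c6 * (- rho / al * (- rho / al - 1) * rpow y (- rho / al - 2)).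
  apply: Rmult_le_pos; first by apply: Rmult_le_pos => //; exact/Rlt_le/rpow_gt0.
  by apply: Rmult_le_pos; [lra | exact/Rlt_le/rpow_gt0].
lra.
Qed.

Lemma ddvhat2_eq y : 0 < y -> ddvhat2 y =
  rpow y (- rho / al - 2) * (c2_scale * c6 * (- rho / al * (- rho / al - 1))
    + ((1 - p) * rpow y (p / (p - 1) + rho / al)
       - al / (al + rho) * rpow m (expoE al rho p)) / (rho * (1 - p) - al * p))
  + z * ((1 - kappa) * rpow beta (1 - kappa) * rpow y (kappa - 2)).
Proof.
move=> y_gt0; rewrite /ddvhat2 /piece_dd /Defs.C4 /Bcoef rpow_opp_div.
rewrite (_ : p / (p - 1) - 2 = (- rho / al - 2) + (p / (p - 1) + rho / al)); last by field; lra.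
rewrite rpow_plus; field; repeat split; try apply: rpow_neq0; lra.
Qed.

Lemma ddvhat2_gt0 y : u <= y -> 0 < ddvhat2 y.
Proof.
move=> uy; have y_gt0 : 0 < y by apply: Rlt_le_trans uy; apply: rpow_gt0.
have E_lt0 := expoE_lt0; have ee_gt0 := e_mul_pred_gt0.
have exp_eq : (p - 1) * (p / (p - 1) + rho / al) = expoE al rho p.
  by rewrite /expoE; field; lra.
have exp_ge0 : 0 <= p / (p - 1) + rho / al.
  have -> : p / (p - 1) + rho / al = expoE al rho p / (p - 1) by rewrite -exp_eq; field; lra.
  by apply/Rlt_le/Rdiv_neg_neg; lra.
have mE_le : rpow m (expoE al rho p) <= rpow y (p / (p - 1) + rho / al).
  by rewrite -exp_eq -rpow_rpow; apply: Rle_Rpower_l => //; split => //; apply: rpow_gt0.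
have frac_lt : al / (al + rho) < 1 - p by apply/Rlt_div_l; lra.
have mE_gt0 := rpow_gt0 m (expoE al rho p).
rewrite ddvhat2_eq //; have := psi_term_ge0 y.
have : 0 < rpow y (- rho / al - 2) * (c2_scale * c6 * (- rho / al * (- rho / al - 1))
    + ((1 - p) * rpow y (p / (p - 1) + rho / al)
       - al / (al + rho) * rpow m (expoE al rho p)) / (rho * (1 - p) - al * p)).
  apply: Rmult_lt_0_compat; first exact: rpow_gt0.
  apply: Rplus_le_lt_0_compat.
    by apply: Rmult_le_pos; [apply: Rmult_le_pos; [exact/Rlt_le/rpow_gt0 | done] | lra].
  by apply: Rdiv_lt_0_compat => //; nra.
lra.
Qed.

Lemma junction_order : upper_region beta lam p m -> lam <= 1 -> u <= w <= beta.
Proof.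
move=> [lam_gt0 lam_m] lam_le1; split.
  by apply: rpow_le_antitone; [split; nra | lra].
apply: rpow_pred_le => //.
have := Rmult_le_compat_l lam _ _ (Rlt_le _ _ lam_gt0) lam_m.
by rewrite -Rmult_assoc Rinv_r ?Rmult_1_l; lra.
Qed.

Lemma vhat23_is_derive y : 0 < y -> is_derive (glue u vhat2 vhat3) y (glue u dvhat2 dvhat3 y).
Proof.
move=> y_gt0; apply: glue_is_derive; first exact: piece_is_derive.
- exact: piece_is_derive.
- exact: vhat3_vhat2_at_u.
- exact: dvhat3_dvhat2_at_u.
Qed.

Section UpperRegion.
Hypotheses (upper : upper_region beta lam p m) (lam_le1 : lam <= 1).

Lemma vhat123_is_derive y : 0 < y ->
  is_derive (glue w vhat1 (glue u vhat2 vhat3)) y (glue w dvhat1 (glue u dvhat2 dvhat3) y).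
Proof.
have [u_le_w _] := junction_order upper lam_le1.
move=> y_gt0; apply: glue_is_derive; first exact: vhat23_is_derive.
- exact: piece_is_derive.
- by rewrite glue_right //; [exact: vhat2_vhat1_at_w | exact: vhat3_vhat2_at_u].
- by rewrite glue_right //; [exact: dvhat2_dvhat1_at_w | exact: dvhat3_dvhat2_at_u].
Qed.

Lemma dvhat123_strictly_increasing a : 0 < a <= u ->
  strictly_increasing_on_Icc (glue w dvhat1 (glue u dvhat2 dvhat3)) a beta.
Proof.
have [lam_gt0 _] := upper; have [u_le_w w_le_beta] := junction_order upper lam_le1.
move=> [a_gt0 a_le_u].
have dd_incr (d dd : R -> R) l r : 0 < l ->
    (forall y, 0 < y -> is_derive d y (dd y)) -> (forall y, l <= y <= r -> 0 < dd y) ->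
    strictly_increasing_on_Icc d l r.
  move=> l_gt0 d_derive dd_gt0.
  by apply: strictly_increasing_of_derive_pos => y ly; [apply: d_derive; lra | apply: dd_gt0].
apply: glue_strictly_increasing; first lra.
- apply: glue_strictly_increasing; first lra.
  + apply: (dd_incr _ ddvhat3) => // [y|y ly]; first exact: piece_d_is_derive.
    by apply: ddvhat3_gt0; lra.
  + apply: (dd_incr _ ddvhat2) => // [|y|y ly]; first exact: rpow_gt0.
    * exact: piece_d_is_derive.
    * by apply: ddvhat2_gt0; lra.
  + exact: dvhat3_dvhat2_at_u.
- apply: (dd_incr _ ddvhat1) => // [|y|y ly]; first exact: rpow_gt0.
  + exact: piece_d_is_derive.
  + by have w_gt0 := rpow_gt0 (lam * m) (p - 1); apply: ddvhat1_gt0; lra.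
- by rewrite glue_right //; [exact: dvhat2_dvhat1_at_w | exact: dvhat3_dvhat2_at_u].
Qed.

Lemma vhat_convex_decreasing_upper a : 0 < a <= u ->
  convex_decreasing_on (fun y => vhat al rho beta lam p kappa y z m) a beta.
Proof.
have [lam_gt0 _] := upper; have [u_le_w w_le_beta] := junction_order upper lam_le1.
move=> a_bounds.
apply: (convex_decreasing_on_ext _ (glue w vhat1 (glue u vhat2 vhat3))).
  by move=> y _; rewrite vhat_glue; case: Rlt_dec.
apply: (convex_decreasing_on_of_derive _ (glue w dvhat1 (glue u dvhat2 dvhat3))).
- by move=> y [ay _]; apply: vhat123_is_derive; lra.
- exact: dvhat123_strictly_increasing.
- rewrite (glue_right _ w_le_beta) ?dvhat1_at_beta; first lra.
  by rewrite glue_right //; [exact: dvhat2_dvhat1_at_w | exact: dvhat3_dvhat2_at_u].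
Qed.

End UpperRegion.

Lemma vhat_convex_decreasing_lower : ~ upper_region beta lam p m -> u <= beta ->
  convex_decreasing_on (fun y => vhat al rho beta lam p kappa y z m) u beta.
Proof.
move=> lower u_le_beta; have u_gt0 := rpow_gt0 m (p - 1).
apply: (convex_decreasing_on_ext _ vhat2).
  move=> y [uy yb]; rewrite vhat_glue; case: Rlt_dec => [lam_gt0|lam_le0] /=.
    rewrite glue_left; first by rewrite glue_right //; exact: vhat3_vhat2_at_u.
    suff : beta < w by lra.
    apply: rpow_pred_gt => //; split; first nra.
    apply: Rnot_le_lt => lam_m; apply: lower; split => //.
    by apply: (Rmult_le_reg_l lam) => //; rewrite -Rmult_assoc Rinv_r; lra.
  by rewrite glue_right //; exact: vhat3_vhat2_at_u.
apply: (convex_decreasing_on_of_derive _ dvhat2).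
- by move=> y [uy _]; apply: piece_is_derive; lra.
- apply: strictly_increasing_of_derive_pos => y [uy _].
    by apply: piece_d_is_derive; lra.
  exact: ddvhat2_gt0.
- by rewrite dvhat2_at_beta //; lra.
Qed.

End DualFunction.

Lemma inv_add_ln_unbounded u M : 0 < u -> exists y, 0 < y < u /\ M < u / y + ln y.
Proof.
move=> u_gt0; set s := 1 + (Rabs M + 2) / u.
have M_le := Rle_abs M; have absM_ge0 := Rabs_pos M.
have us : u * s = u + Rabs M + 2 by rewrite /s; field; lra.
have s_ge1 : 1 <= s.
  have : 0 <= (Rabs M + 2) / u by apply: Rdiv_le_0_compat; lra.
  by rewrite /s; lra.
have ln_s : ln s <= s - 1 by apply: ln_le_sub1; lra.
(* With y = 1/s^2, [ln_s] gives u/y + ln y >= u s^2 - 2 s + 2. *)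
exists (/ (s * s)); split; first split.
- by apply/Rinv_0_lt_compat; nra.
- by apply: (Rmult_lt_reg_l (s * s)); [nra | rewrite Rinv_r; nra].
- rewrite ln_Rinv ?ln_mult; try nra.
  rewrite /Rdiv Rinv_inv; nra.
Qed.

Section FreeBoundary.
Variables (al rho beta lam p m : R).
Hypotheses (al_gt0 : 0 < al) (rho_gt0 : 0 < rho) (beta_gt0 : 0 < beta) (m_gt0 : 0 < m)
  (p_lt1 : p < 1) (p_neq0 : p <> 0).

Local Notation u := (rpow m (p - 1)).
Local Notation lhs := (fb_lhs al rho beta p m).
Local Notation rhs := (fb_rhs al rho beta lam p m).

Lemma ln_exp_div x : ln (exp x / beta) = x - ln beta.
Proof. by rewrite ln_div ?ln_exp //; exact: exp_pos. Qed.

Lemma ln_mul_exp x : ln (beta * exp x) = ln beta + x.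
Proof. by rewrite ln_mult ?ln_exp //; exact: exp_pos. Qed.

Lemma fb_rhs_sub_lhs_at_u : 0 < lam ->
  let t := rpow (rpow (lam * m) (p - 1) / beta) ((al + rho) / al) in
  rhs - lhs u = lam * beta * al / (al + rho) ^ 2 * (t - 1 - ln t).
Proof.
move=> lam_gt0 t; rewrite /fb_rhs /fb_lhs /t /rpow /Rpower.
rewrite ln_mult ?ln_exp_div ?ln_exp ?ln_mul_exp ?ln_mult //; try lra; last exact: exp_pos.
set Lq := exp ((al + rho) / al * ((p - 1) * ln lam)).
set Mq := exp ((al + rho) / al * ((p - 1) * ln m)).
set P1 := exp ((p - 1) * ln m).
set Bs := exp (- rho / al * ln beta).
have -> : exp ((al * p - (1 - p) * rho) / al * ln lam) = lam * Lq.
  transitivity (exp (ln lam) * Lq); last by rewrite exp_ln.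
  by rewrite /Lq -exp_plus; congr exp; field; lra.
have -> : exp (- ((al + rho) * (1 - p)) / al * ln m) = Mq by rewrite /Mq; congr exp; field; lra.
have -> : exp (rho / al * ((p - 1) * ln m)) = Mq / P1.
  by rewrite /Mq /P1 /Rdiv -exp_Ropp -exp_plus; congr exp; field; lra.
have -> : exp ((al + rho) / al * ((p - 1) * (ln lam + ln m) - ln beta)) = Lq * Mq * Bs / beta.
  transitivity (Lq * Mq * Bs * exp (- ln beta)); last by rewrite exp_Ropp exp_ln.
  by rewrite /Lq /Mq /Bs -!exp_plus; congr exp; field; lra.
have P1_gt0 : 0 < P1 by apply: exp_pos.
field; lra.
Qed.

Lemma fb_lhs_at_u_le : 0 < lam -> lhs u <= rhs.
Proof.
move=> lam_gt0; have diff_eq := fb_rhs_sub_lhs_at_u lam_gt0; cbv zeta in diff_eq.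
have ln_t := ln_le_sub1 (rpow_gt0 (rpow (lam * m) (p - 1) / beta) ((al + rho) / al)).
have : 0 < lam * beta * al / (al + rho) ^ 2.
  by apply: Rdiv_lt_0_compat; [apply: Rmult_lt_0_compat => //; nra | nra].
nra.
Qed.

Lemma fb_lhs_large : exists y, 0 < y < u /\ rhs < lhs y.
Proof.
set Bs := rpow beta (- rho / al); have Bs_gt0 : 0 < Bs := rpow_gt0 _ _.
have u_gt0 : 0 < u := rpow_gt0 _ _.
set c := u * Bs * rpow u (rho / al).
have [y [y_bounds big]] :=
  inv_add_ln_unbounded u ((al + rho) * rhs / beta + ln beta + c / beta) u_gt0.
exists y; split => //.
have top_ge0 : 0 <= rho / (al + rho) ^ 2 * Bs * rpow y ((al + rho) / al).
  apply: Rmult_le_pos; last exact/Rlt_le/rpow_gt0.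
  by apply: Rmult_le_pos; [apply/Rlt_le/Rdiv_lt_0_compat; nra | lra].
have last_le : u * Bs * rpow y (rho / al) <= c.
  apply: Rmult_le_compat_l; first by apply: Rmult_le_pos; lra.
  by apply: Rle_Rpower_l; [apply/Rlt_le/Rdiv_lt_0_compat | lra].
have scaled : (al + rho) * rhs + beta * ln beta + c < beta * (u / y + ln y).
  have -> : (al + rho) * rhs + beta * ln beta + c
           = beta * ((al + rho) * rhs / beta + ln beta + c / beta) by field; lra.
  exact: Rmult_lt_compat_l.
rewrite /fb_lhs ln_div; try lra.
apply: (Rmult_lt_reg_l (al + rho)); first lra.
have -> : (al + rho) * (beta * u / ((al + rho) * y) + beta / (al + rho) * (ln y - ln beta)
    + rho / (al + rho) ^ 2 * Bs * rpow y ((al + rho) / al)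
    - u / (al + rho) * Bs * rpow y (rho / al))
  = beta * (u / y + ln y) - beta * ln beta
    + (al + rho) * (rho / (al + rho) ^ 2 * Bs * rpow y ((al + rho) / al))
    - u * Bs * rpow y (rho / al).
  by field; lra.
nra.
Qed.

Lemma fb_solution_exists : 0 < lam -> exists y, 0 < y <= u /\ lhs y = rhs.
Proof.
move=> lam_gt0; have [y0 [[y0_gt0 y0_lt] rhs_lt]] := fb_lhs_large.
have at_u := fb_lhs_at_u_le lam_gt0.
case: (Req_dec (lhs u) rhs) => [eq_u|neq_u].
  by exists u; split => //; split; [apply: rpow_gt0 | lra].
have cont x : y0 <= x <= u -> continuity_pt (fun y => rhs - lhs y) x.
  move=> x_bounds; apply/continuity_pt_filterlim.
  apply: (ex_derive_continuous (fun y => rhs - lhs y)).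
  rewrite /fb_lhs; auto_derive.
  repeat split; try (eexists; apply: is_derive_rpow); try lra.
  - by apply: Rmult_integral_contrapositive_currified; lra.
  - by apply: Rdiv_lt_0_compat; lra.
have at_y0 : rhs - lhs y0 < 0 by lra.
have at_u' : 0 < rhs - lhs u by lra.
have [y [y_bounds root]] := IVT_interv (fun y => rhs - lhs y) y0 u cont y0_lt at_y0 at_u'.
by exists y; split; [lra | lra].
Qed.

Lemma ystar_bounds : 0 < ystar al rho beta lam p m <= u.
Proof.
rewrite /ystar; case: upper_region_dec => [[lam_gt0 lam_m]|not_upper] /=.
  have [y y_spec] := fb_solution_exists lam_gt0.
  by have [] := epsilon_spec (inhabits 0)
    (fun y => 0 < y <= u /\ lhs y = rhs) (ex_intro _ y y_spec).
by split; [apply: rpow_gt0 | lra].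
Qed.

End FreeBoundary.

Lemma C6_integrand_ge0 al rho beta p l y : 0 < al -> 0 < rho -> 0 < beta ->
  0 < y <= rpow l (p - 1) ->
  0 <= al / (rho * (al + rho)) * rpow l (p - 1) * rpow beta (- rho / al) * rpow y (rho / al)
       - al * beta / (al + rho) ^ 2 * rpow beta (- (al + rho) / al)
         * rpow y ((al + rho) / al).
Proof.
move=> al_gt0 rho_gt0 beta_gt0 [y_gt0 y_le].
have -> : rpow beta (- (al + rho) / al) = rpow beta (- rho / al) / rpow beta 1.
  by rewrite /Rdiv -rpow_opp -rpow_plus; congr rpow; field; lra.
have -> : rpow y ((al + rho) / al) = rpow y 1 * rpow y (rho / al).
  by rewrite -rpow_plus; congr rpow; field; lra.
rewrite !rpow_1 //.
have Bs_gt0 := rpow_gt0 beta (- rho / al); have Ys_gt0 := rpow_gt0 y (rho / al).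
have y_frac : y / (al + rho) <= rpow l (p - 1) / rho.
  apply: Rle_trans (_ : y / rho <= _).
    by apply: Rmult_le_compat_l; [lra | apply: Rinv_le_contravar; lra].
  by apply: Rmult_le_compat_r; [apply/Rlt_le/Rinv_0_lt_compat | ].
have -> : al / (rho * (al + rho)) * rpow l (p - 1) * rpow beta (- rho / al) * rpow y (rho / al)
    - al * beta / (al + rho) ^ 2 * (rpow beta (- rho / al) / beta) * (y * rpow y (rho / al))
  = al * rpow beta (- rho / al) * rpow y (rho / al) / (al + rho)
    * (rpow l (p - 1) / rho - y / (al + rho)) by field; lra.
apply: Rmult_le_pos; last lra.
by apply/Rlt_le/Rdiv_lt_0_compat; [apply: Rmult_lt_0_compat; [nra | done] | lra].
Qed.

(* Without a limit, [RInt_gen] is the limit of the degenerate filter, which Coquelicot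
   evaluates to [real p_infty = 0]. *)
Lemma RInt_gen_not_ex (F : R -> R) (Fa Fb : (R -> Prop) -> Prop) :
  ~ ex_RInt_gen F Fa Fb -> RInt_gen F Fa Fb = 0.
Proof.
move=> not_ex; rewrite /RInt_gen /Hierarchy.iota /lim /= /R_complete_lim.
match goal with |- context [Lub_Rbar ?Q] => set P := Q end.
have P_all x : P x by move=> y y_int; case: not_ex; exists y.
suff -> : Lub_Rbar P = p_infty by [].
have [P_ub P_least] := Lub_Rbar_correct P.
case E: (Lub_Rbar P) => [x| |] //; rewrite E in P_ub.
- by have /= := P_ub (x + 1) (P_all _); lra.
- by case: (P_ub 0 (P_all 0)).
Qed.

Lemma is_RInt_gen_ge0 (F : R -> R) m l : (forall x, m <= x -> 0 <= F x) ->
  is_RInt_gen F (at_point m) (Rbar_locally p_infty) l -> 0 <= l.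
Proof.
move=> F_ge0 F_int.
have rays (Q : R * R -> Prop) : (forall x, m < x -> Q (m, x)) ->
    filter_prod (at_point m) (Rbar_locally p_infty) Q.
  move=> Qm; apply: (Filter_prod _ _ _ (fun x => x = m) (fun x => m < x)) => //.
  - by exists m.
  - by move=> a b -> mb; apply: Qm.
suff : norm (scal 0 l) <= l by have := norm_ge_0 (scal 0 l); lra.
apply: (RInt_gen_norm (Fa := at_point m) (Fb := Rbar_locally p_infty)
  (fun y => scal 0 (F y)) F (scal 0 l) l).
- by apply: rays => x /=; lra.
- apply: rays => x _ t /= t_bounds.
  by rewrite /scal /= /mult /= Rmult_0_l norm_zero; apply: F_ge0; lra.
- exact: is_RInt_gen_scal.
- exact: F_int.
Qed.

Lemma RInt_gen_ge0 (F : R -> R) m : (forall x, m <= x -> 0 <= F x) ->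
  0 <= RInt_gen F (at_point m) (Rbar_locally p_infty).
Proof.
move=> F_ge0.
case: (classic (ex_RInt_gen F (at_point m) (Rbar_locally p_infty))) => [[l F_int]|not_ex].
  by rewrite (is_RInt_gen_unique F l F_int); exact: is_RInt_gen_ge0 F_int.
by rewrite RInt_gen_not_ex //; lra.
Qed.

Lemma C6_ge0 al rho beta lam p m : 0 < al -> 0 < rho -> 0 < beta -> 0 < m ->
  p < 1 -> p <> 0 -> 0 <= C6 al rho beta lam p m.
Proof.
move=> al_gt0 rho_gt0 beta_gt0 m_gt0 p_lt1 p_neq0; apply: RInt_gen_ge0 => l ml.
by apply: C6_integrand_ge0 => //; apply: ystar_bounds => //; lra.
Qed.

Section QuadraticForm.
Local Open Scope ring_scope.
Context {d : nat}.

Lemma norm2_gt0 {v : 'cV[R]_d} : v != 0 -> 0 < norm2 v.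
Proof.
move=> v_neq0; have [i vi_neq0] : exists i, v i ord0 != 0.
  case: (pickP (fun i => v i ord0 != 0)) => [i|v0]; first by exists i.
  case/eqP: v_neq0; apply/matrixP => i j; rewrite (ord1 j) [RHS]mxE.
  by move: (v0 i) => /negbFE/eqP.
rewrite /norm2 mxE (bigD1 i) //= mxE -GRing.expr2.
apply: Num.Theory.ltr_pwDl; first by rewrite Num.Theory.exprn_even_gt0.
by apply: Num.Theory.sumr_ge0 => j _; rewrite mxE -GRing.expr2 Num.Theory.sqr_ge0.
Qed.

Lemma inv_gram_form (mu : 'cV[R]_d) (sigma : 'M[R]_d) : sigma \in unitmx ->
  mu^T *m invmx (sigma *m sigma^T) *m mu
  = (invmx sigma *m mu)^T *m (invmx sigma *m mu).
Proof.
move=> sigma_unit; set v := invmx sigma *m mu.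
have -> : mu = sigma *m v by rewrite /v mulKVmx.
have gram_unit : sigma *m sigma^T \in unitmx by rewrite unitmx_mul sigma_unit unitmx_tr.
have sandwich : sigma^T *m invmx (sigma *m sigma^T) *m sigma = 1%:M.
  rewrite -[LHS](mulKmx sigma_unit) (mulmxA sigma (sigma^T *m _)) (mulmxA sigma sigma^T).
  by rewrite mulmxV // mul1mx mulVmx.
by rewrite trmx_mul -!mulmxA (mulmxA sigma^T) (mulmxA (sigma^T *m _)) sandwich mul1mx.
Qed.

End QuadraticForm.

Lemma alphaC_gt0 d (mu : 'cV[R]_d) (sigma : 'M[R]_d) :
  sigma \in unitmx -> mu != 0%R -> 0 < alphaC mu sigma.
Proof.
move=> sigma_unit mu_neq0.
have v_neq0 : (invmx sigma *m mu != 0)%R.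
  by apply: contra mu_neq0 => /eqP v0; rewrite -(mulKVmx sigma_unit mu) v0 mulmx0.
move/RltP: (norm2_gt0 v_neq0); rewrite /alphaC inv_gram_form // /norm2 => pos.
by apply: Rmult_lt_0_compat; [lra | exact: pos].
Qed.

Lemma rho_gt_rho0C {alpha muZ p rho} : 0 < alpha -> p < 1 -> p <> 0 ->
  rho0C alpha muZ p < rho -> muZ < rho /\ 0 < rho * (1 - p) - alpha * p.
Proof.
move=> alpha_gt0 p_lt1 p_neq0; rewrite /rho0C.
case: Rlt_dec => [p_gt0|p_le0] rho_gt.
- have [muZ_le rest_le] := proj1 (Rmax_Rlt _ _ _) rho_gt.
  have [_ frac_lt] := proj1 (Rmax_Rlt _ _ _) rest_le.
  have -> : alpha * p = alpha * p / (1 - p) * (1 - p) by field; lra.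
  split; nra.
- have [muZ_le zero_lt] := proj1 (Rmax_Rlt _ _ _) rho_gt.
  split; nra.
Qed.

Lemma kappaC_bounds {alpha eta rho muZ} : 0 < alpha -> muZ < rho -> eta <= muZ ->
  0 < kappaC alpha eta rho muZ <= 1.
Proof.
move=> alpha_gt0 muZ_lt eta_le; rewrite /kappaC.
set c := rho - eta - alpha; set disc := c ^ 2 + 4 * alpha * (rho - muZ).
have disc_ge0 : 0 <= disc by rewrite /disc; nra.
have s_ge0 := sqrt_pos disc; have s_sq := sqrt_sqrt disc disc_ge0.
set s := sqrt disc in s_ge0 s_sq *.
have c_lt : c < s.
  by case: (Rlt_or_le c 0) => c0; [lra | rewrite /disc in s_sq; nra].
have s_le : s <= 2 * alpha + c.
  have : disc <= (2 * alpha + c) * (2 * alpha + c) by rewrite /disc /c; nra.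
  rewrite /c in c_lt *; nra.
split; first by apply: Rdiv_lt_0_compat; lra.
by apply/Rle_div_l; lra.
Qed.

Theorem lemma3p2 (d : nat) (mu : 'cV[R]_d) (sigma : 'M[R]_d) (muZ sigmaZ : R)
  (gamma : 'cV[R]_d) (rho beta lam p : R) :
  sigma \in unitmx ->
  mu != 0%R ->
  0 <= sigmaZ ->
  norm2 gamma = 1 ->
  0 < rho -> 0 < beta -> 0 <= lam <= 1 -> p < 1 -> p <> 0 ->
  let alpha := alphaC mu sigma in
  let eta := etaC mu sigma sigmaZ gamma in
  let kappa := kappaC alpha eta rho muZ in
  eta <= muZ ->
  rho0C alpha muZ p < rho ->
  forall z m : R, 0 <= z -> rpow beta (1 / (p - 1)) <= m ->
    let f := fun y => vhat alpha rho beta lam p kappa y z m in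
    let a := ystar alpha rho beta lam p m in
    continuous_on_Icc f a beta /\ strictly_convex_on_Icc f a beta
    /\ decreasing_on_Icc f a beta.
Proof.
move=> sigma_unit mu_neq0 _ _ rho_gt0 beta_gt0 [_ lam_le1] p_lt1 p_neq0 alpha eta kappa
  eta_le rho_gt z m z_ge0 m_ge f a.
have al_gt0 : 0 < alpha by apply: alphaC_gt0.
have [muZ_lt D_gt0] := rho_gt_rho0C al_gt0 p_lt1 p_neq0 rho_gt.
have [kappa_gt0 kappa_le1] := kappaC_bounds al_gt0 muZ_lt eta_le.
have m_gt0 : 0 < m by have := rpow_gt0 beta (1 / (p - 1)); lra.
have c6_ge0 : 0 <= C6 alpha rho beta lam p m by apply: C6_ge0.
have u_le_beta : rpow m (p - 1) <= beta by apply: rpow_pred_le.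
case: (upper_region_dec beta lam p m) => [upper|lower].
  by apply: vhat_convex_decreasing_upper => //; apply: ystar_bounds.
have -> : a = rpow m (p - 1) by rewrite /a /ystar; case: upper_region_dec.
exact: vhat_convex_decreasing_lower.
Qed.
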